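(* For all relational types $R,R'$, terms $t_1,t_2$ and environment $\gamma$: $t_1\,\llbracket R\simeq R'\rrbracket_\gamma\,t_2$ holds iff $\llbracket R\rrbracket_\gamma=\llbracket R'\rrbracket_\gamma$.
   Context: Terms are those of the pure untyped $\lambda$-calculus, up to $\alpha$-equivalence; $=_{\beta\eta}$ is $\beta\eta$-convertibility. Relational types: $R ::= X \mid R\to R' \mid \forall X.R \mid R^{\cup} \mid R\cdot R' \mid t$ (last form: promotion of a term). A relation on terms is $\beta\eta$-closed if closed under replacing either related term by a $\beta\eta$-equal one; $\mathcal{R}$ is the set of such relations; environments $\gamma$ map finitely many type variables to $\mathcal{R}$. Interpretation: $\llbracket X\rrbracket_\gamma=\gamma(X)$; $t\,\llbracket R\to R'\rrbracket_\gamma\,t'$ iff for all $a,a'$ with $a\,\llbracket R\rrbracket_\gamma\,a'$, $t\,a\,\llbracket R'\rrbracket_\gamma\,t'\,a'$; $\llbracket \forall X.R\rrbracket_\gamma=\bigcap_{r\in\mathcal{R}}\llbracket R\rrbracket_{\gamma[X\mapsto r]}$; $t\,\llbracket R^\cup\rrbracket_\gamma\,t'$ iff $t'\,\llbracket R\rrbracket_\gamma\,t$; $t\,\llbracket R\cdot R'\rrbracket_\gamma\,t'$ iff $\exists t''$, $t\,\llbracket R\rrbracket_\gamma\,t''$ and $t''\,\llbracket R'\rrbracket_\gamma\,t'$; $\llbracket \hat t\rrbracket_\gamma=\{(t,t')\mid \hat t\,t=_{\beta\eta}t'\}$. Let $I:=\lambda x.x$, $K:=\lambda x.\lambda y.x$,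 $t\bullet R:=t\cdot R\cdot t^\cup$, $R\subseteq R':=(K\,I)\bullet(R\to R')$, and $R\simeq R':=(R\subseteq R')\cdot(R'\subseteq R)$. *)

From Stdlib Require Import Arith Relations.

Inductive term : Type :=
| Var : nat -> term
| App : term -> term -> term
| Lam : term -> term.

Fixpoint lift (k : nat) (t : term) : term :=
  match t with
  | Var n => if Nat.ltb n k then Var n else Var (S n)
  | App a b => App (lift k a) (lift k b)
  | Lam b => Lam (lift (S k) b)
  end.

Fixpoint subst (k : nat) (u : term) (t : term) : term :=
  match t with
  | Var n => if Nat.ltb n k then Var n
             else if Nat.eqb n k then u else Var (pred n)
  | App a b => App (subst k u a) (subst k u b)
  | Lam b => Lam (subst (S k) (lift 0 u) b)
  end.

Inductive step : term -> term -> Prop :=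
| step_beta : forall b a, step (App (Lam b) a) (subst 0 a b)
| step_eta : forall t, step (Lam (App (lift 0 t) (Var 0))) t
| step_appl : forall a a' b, step a a' -> step (App a b) (App a' b)
| step_appr : forall a b b', step b b' -> step (App a b) (App a b')
| step_lam : forall b b', step b b' -> step (Lam b) (Lam b').

Definition beq : term -> term -> Prop := clos_refl_sym_trans term step.

Definition rel := term -> term -> Prop.

Definition bclosed (r : rel) : Prop :=
  forall t1 t1' t2 t2', beq t1 t1' -> beq t2 t2' -> r t1 t2 -> r t1' t2'.

Inductive rtype : Type :=
| RVar : nat -> rtype
| RArr : rtype -> rtype -> rtype
| RAll : nat -> rtype -> rtype
| RConv : rtype -> rtype
| RComp : rtype -> rtype -> rtype
| RProm : term -> rtype.

Definition env := nat -> rel.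

Definition env_ok (g : env) : Prop := forall X, bclosed (g X).

Definition upd (g : env) (X : nat) (r : rel) : env :=
  fun Y => if Nat.eqb Y X then r else g Y.

Fixpoint interp (g : env) (R : rtype) : rel :=
  match R with
  | RVar X => g X
  | RArr R1 R2 => fun t t' =>
      forall a a', interp g R1 a a' -> interp g R2 (App t a) (App t' a')
  | RAll X R1 => fun t t' =>
      forall r : rel, bclosed r -> interp (upd g X r) R1 t t'
  | RConv R1 => fun t t' => interp g R1 t' t
  | RComp R1 R2 => fun t t' =>
      exists t'', interp g R1 t t'' /\ interp g R2 t'' t'
  | RProm u => fun t t' => beq (App u t) t'
  end.

Definition tI : term := Lam (Var 0).
Definition tK : term := Lam (Lam (Var 1)).

(* t . R := t . R . t^U, read as t . (R . t^U) *)
Definition bullet (t : term) (R : rtype) : rtype :=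
  RComp (RProm t) (RComp R (RConv (RProm t))).

Definition rsub (R R' : rtype) : rtype := bullet (App tK tI) (RArr R R').

Definition requiv (R R' : rtype) : rtype := RComp (rsub R R') (rsub R' R).

(* A subtyping witness [K I . (R -> R') . (K I)^U] relates two terms iff
   [R -> R'] relates [K I t] and [K I s], both of which are beta-eta equal to
   [I]; and [I] is related to itself by [R -> R'] exactly when [R] is included
   in [R'].  So [R <= R'] relates any two terms or none, according as
   [[R]] is contained in [[R']], and composing the two inclusions gives
   equality. *)
From Stdlib Require Import Relations.

Lemma beq_refl t : beq t t.
Proof. apply rst_refl. Qed.

Lemma beq_sym a b : beq a b -> beq b a.
Proof. apply rst_sym. Qed.

Lemma beq_trans a b c : beq a b -> beq b c -> beq a c.
Proof. apply rst_trans. Qed.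

Lemma beq_compat (f : term -> term) :
  (forall a a', step a a' -> step (f a) (f a')) ->
  forall a a', beq a a' -> beq (f a) (f a').
Proof.
  intros Hf a a' E; induction E.
  - apply rst_step, Hf; assumption.
  - apply beq_refl.
  - apply beq_sym; assumption.
  - eapply beq_trans; eassumption.
Qed.

Lemma beq_app a a' b b' : beq a a' -> beq b b' -> beq (App a b) (App a' b').
Proof.
  intros Ea Eb; apply beq_trans with (App a' b).
  - apply (beq_compat (fun x => App x b)); [intros; apply step_appl|]; assumption.
  - apply (beq_compat (App a')); [intros; apply step_appr|]; assumption.
Qed.

Lemma beq_I_app a : beq (App tI a) a.
Proof. apply rst_step, step_beta. Qed.

Lemma beq_KI_app t : beq (App (App tK tI) t) tI.
Proof.
  apply beq_trans with (App (Lam tI) t).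
  - apply beq_app; [apply rst_step, step_beta | apply beq_refl].
  - apply rst_step, step_beta.
Qed.

Lemma env_ok_upd g X r : env_ok g -> bclosed r -> env_ok (upd g X r).
Proof. intros Hg Hr Y; unfold upd; destruct (Nat.eqb Y X); auto. Qed.

Lemma interp_bclosed R : forall g, env_ok g -> bclosed (interp g R).
Proof.
  induction R as [X | R1 IH1 R2 IH2 | X R1 IH | R1 IH | R1 IH1 R2 IH2 | u];
    intros g Hg t1 t1' t2 t2' E1 E2; simpl.
  - apply Hg; assumption.
  - intros H a a' Ha.
    apply (IH2 g Hg (App t1 a) _ (App t2 a')); try apply beq_app; auto using beq_refl.
  - intros H r Hr.
    apply (IH (upd g X r) (env_ok_upd g X r Hg Hr) t1 _ t2); auto.
  - apply IH; assumption.
  - intros [m [H1 H2]]; exists m; split.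
    + apply (IH1 g Hg t1 _ m); auto using beq_refl.
    + apply (IH2 g Hg m _ t2); auto using beq_refl.
  - intros H; apply beq_trans with t2; [|assumption].
    apply beq_trans with (App u t1); [|assumption].
    apply beq_app; [apply beq_refl | apply beq_sym; assumption].
Qed.

Lemma interp_bullet g t R t1 t2 : env_ok g ->
  (interp g (bullet t R) t1 t2 <-> interp g R (App t t1) (App t t2)).
Proof.
  intros Hg; simpl; split.
  - intros [x [Ex [y [Hxy Ey]]]].
    apply (interp_bclosed R g Hg x _ y); auto using beq_sym.
  - intros H; exists (App t t1); split; [apply beq_refl|].
    exists (App t t2); split; [assumption | apply beq_refl].
Qed.

Lemma interp_arr_I g R R' : env_ok g ->
  (interp g (RArr R R') tI tI <-> (forall a b, interp g R a b -> interp g R' a b)).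
Proof.
  intros Hg; simpl; split; intros H a b Hab.
  - apply (interp_bclosed R' g Hg (App tI a) _ (App tI b)); auto using beq_I_app.
  - apply (interp_bclosed R' g Hg a _ b); auto using beq_sym, beq_I_app.
Qed.

Lemma interp_rsub g R R' t s : env_ok g ->
  (interp g (rsub R R') t s <-> (forall a b, interp g R a b -> interp g R' a b)).
Proof.
  intros Hg; unfold rsub; rewrite interp_bullet by assumption.
  rewrite <- (interp_arr_I g R R' Hg).
  split; apply (interp_bclosed (RArr R R') g Hg);
    auto using beq_KI_app, beq_sym.
Qed.

Theorem mainTheorem19 :
  forall (R R' : rtype) (t1 t2 : term) (g : env),
    env_ok g ->
    (interp g (requiv R R') t1 t2 <->
     (forall a b, interp g R a b <-> interp g R' a b)).
Proof.
  intros R R' t1 t2 g Hg; split.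
  - intros [u [H12 H21]] a b.
    rewrite interp_rsub in H12, H21 by assumption.
    split; auto.
  - intros H; exists t1; split; apply interp_rsub; auto; intros a b; apply H.
Qed.
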